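(* Let $(J,R,\sigma)$ be a generalized complex structure of type $1$ on a real $4$-dimensional Lie algebra $\mathfrak g$, with pure spinor $\rho=(\theta+iJ^*\theta)+(i-\lambda)\omega\wedge(\theta+iJ^*\theta)$ as described in the context. Then $d\rho=0$ (the structure is Calabi–Yau) if and only if $[\mathfrak g,\mathfrak g]\subset\operatorname{Im}R$.
   Context: Let $\mathfrak g$ be a real finite-dimensional Lie algebra, $\Phi(\mathfrak g)=\mathfrak g\oplus\mathfrak g^*$ with the neutral pairing $\langle u+\alpha,v+\beta\rangle=\tfrac12(\alpha(v)+\beta(u))$ and the bracket $[u+\alpha,v+\beta]=[u,v]+\mathrm{ad}_u^t\beta-\mathrm{ad}_v^t\alpha$, where $(\mathrm{ad}_u^t\alpha)(v)=-\alpha([u,v])$. A generalized complex structure on $\mathfrak g$ is an endomorphism $K$ of $\Phi(\mathfrak g)$ with $K^2=-\mathrm{Id}$, $\langle Ka,b\rangle+\langle a,Kb\rangle=0$ for all $a,b$, and vanishing Nijenhuis torsion $N_K(a,b)=[Ka,Kb]-K[Ka,b]-K[a,Kb]+K^2[a,b]$. Writing $K=\begin{pmatrix}J&R\\ \sigma&-J^*\end{pmatrix}$ with $J\in\mathrm{End}(\mathfrak g)$ and skew-symmetric $R:\mathfrak g^*\to\mathfrak g$, $\sigma:\mathfrak g\to\mathfrak g^*$, the triple $(J,R,\sigma)$ is also called a generalized complex structure on $\mathfrak g$; in dimension 4 it is of type 1 if $\operatorname{rank}R=2$. For such a structure, with $\mathfrak h=\operatorname{Im}R$, $\mathfrak p=\ker\sigma$,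 one has $\mathfrak g=\mathfrak h\oplus\mathfrak p$ and $J|_{\mathfrak h}=\lambda\mathrm{Id}$; $\omega\in\wedge^2\mathfrak g^*$ is defined by $\omega(R\xi_1,R\xi_2)=\xi_1(R\xi_2)$ and $i_X\omega=0$ for $X\in\mathfrak p$; $\theta$ is a nonzero element of the annihilator $\mathfrak h^0$. $d$ denotes the Chevalley–Eilenberg differential on $\wedge^\bullet\mathfrak g^*\otimes\mathbb C$. *)

(* A real 4-dimensional Lie algebra is modelled on row
   vectors 'rV[R]_4 over an arbitrary real closed field R (this includes the
   real numbers); complex scalars are R[i] from mathcomp-real-closed. *)
From HB Require Import structures.
From mathcomp Require Import all_boot all_order all_algebra.
From mathcomp Require Import complex.
Set Implicit Arguments. Unset Strict Implicit. Unset Printing Implicit Defensive.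
Import Order.TTheory GRing.Theory Num.Theory.
Local Open Scope ring_scope.
Local Open Scope complex_scope.

(* vectors of g and covectors of g^* are both row vectors of length 4 *)
Notation vec R := 'rV[R]_4.

Definition dpair (R : rcfType) (alpha v : vec R) : R := (alpha *m v^T) 0 0.

Definition is_lie_bracket (R : rcfType) (br : vec R -> vec R -> vec R) : Prop :=
  (forall (a : R) (u v w : vec R), br (a *: u + v) w = a *: br u w + br v w) /\
  (forall u v : vec R, br u v = - br v u) /\
  (forall u v w : vec R, br u (br v w) + br v (br w u) + br w (br u v) = 0).

Definition adt (R : rcfType) (br : vec R -> vec R -> vec R) (u alpha : vec R)
  : vec R := \row_j (- dpair alpha (br u (delta_mx 0 j))).

Definition Phi (R : rcfType) := (vec R * vec R)%type.

Definition Phi_add (R : rcfType) (a b : Phi R) : Phi R := (a.1 + b.1, a.2 + b.2).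
Definition Phi_opp (R : rcfType) (a : Phi R) : Phi R := (- a.1, - a.2).

Definition Phi_pair (R : rcfType) (a b : Phi R) : R :=
  2^-1 * (dpair a.2 b.1 + dpair b.2 a.1).

Definition Phi_br (R : rcfType) (br : vec R -> vec R -> vec R) (a b : Phi R)
  : Phi R := (br a.1 b.1, adt br a.1 b.2 - adt br b.1 a.2).

(* An endomorphism K of Phi(g), given by its four blocks (matrices acting on
   row vectors):  K(u + alpha) = (J u + R alpha) + (sigma u + D alpha),
   with J u = u *m MJ, R alpha = alpha *m MR, sigma u = u *m Ms,
   D alpha = alpha *m MD. *)
Definition Kapp (R : rcfType) (MJ MR Ms MD : 'M[R]_4) (a : Phi R) : Phi R :=
  (a.1 *m MJ + a.2 *m MR, a.1 *m Ms + a.2 *m MD).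

(* generalized complex structure: K^2 = -Id, K skew for <,>, N_K = 0 *)
Definition is_gen_complex (R : rcfType) (br : vec R -> vec R -> vec R)
  (MJ MR Ms MD : 'M[R]_4) : Prop :=
  let K := Kapp MJ MR Ms MD in
  let brP := Phi_br br in
  (forall a : Phi R, K (K a) = Phi_opp a) /\
  (forall a b : Phi R, Phi_pair (K a) b + Phi_pair a (K b) = 0) /\
  (forall a b : Phi R,
     Phi_add (Phi_add (brP (K a) (K b)) (Phi_opp (K (brP (K a) b))))
             (Phi_add (Phi_opp (K (brP a (K b)))) (K (K (brP a b))))
     = (0, 0)).

(* complex-valued forms of degree 0..4 on g, as functions of their arguments *)
Definition form1 (R : rcfType) := vec R -> R[i].
Definition form2 (R : rcfType) := vec R -> vec R -> R[i].
Definition form3 (R : rcfType) := vec R -> vec R -> vec R -> R[i].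
Definition form4 (R : rcfType) := vec R -> vec R -> vec R -> vec R -> R[i].

(* mixed-degree forms in  wedge^. g^* (x) C  (wedge^k g^* = 0 for k > 4) *)
Record mform (R : rcfType) := MForm {
  mf0 : R[i]; mf1 : form1 R; mf2 : form2 R; mf3 : form3 R; mf4 : form4 R }.

Section CE.
Variables (R : rcfType) (br : vec R -> vec R -> vec R).

(* Chevalley-Eilenberg differential (trivial coefficients):
   d f (x_0,..,x_k) = sum_{i<j} (-1)^(i+j) f([x_i,x_j], x_0,..^i..^j..,x_k) *)
Definition d1 (f : form1 R) : form2 R := fun x0 x1 => - f (br x0 x1).
Definition d2 (f : form2 R) : form3 R := fun x0 x1 x2 =>
  - f (br x0 x1) x2 + f (br x0 x2) x1 - f (br x1 x2) x0.
Definition d3 (f : form3 R) : form4 R := fun x0 x1 x2 x3 =>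
  - f (br x0 x1) x2 x3 + f (br x0 x2) x1 x3 - f (br x0 x3) x1 x2
  - f (br x1 x2) x0 x3 + f (br x1 x3) x0 x2 - f (br x2 x3) x0 x1.

(* d on mixed forms: d of a 0-form is 0, d of a 4-form is a 5-form = 0 *)
Definition dmf (m : mform R) : mform R :=
  MForm 0 (fun _ => 0) (d1 (mf1 m)) (d2 (mf2 m)) (d3 (mf3 m)).
End CE.

Definition mform_eq0 (R : rcfType) (m : mform R) : Prop :=
  mf0 m = 0 /\ (forall x, mf1 m x = 0) /\ (forall x y, mf2 m x y = 0) /\
  (forall x y z, mf3 m x y z = 0) /\ (forall x y z w, mf4 m x y z w = 0).

Definition wedge21 (R : rcfType) (w : form2 R) (f : form1 R) : form3 R :=
  fun x y z => w x y * f z - w x z * f y + w y z * f x.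

Definition cform1 (R : rcfType) (alpha : vec R) : form1 R :=
  fun x => (dpair alpha x)%:C.
Definition cform2 (R : rcfType) (W : 'M[R]_4) : form2 R :=
  fun x y => ((x *m W *m y^T) 0 0)%:C.

Definition dualmap (R : rcfType) (MJ : 'M[R]_4) (theta : vec R) : vec R :=
  theta *m MJ^T.

Definition rho_spinor (R : rcfType) (MJ W : 'M[R]_4) (lam : R) (theta : vec R)
  : mform R :=
  let Th : form1 R := fun x => cform1 theta x + 'i * cform1 (dualmap MJ theta) x in
  MForm 0 Th (fun _ _ => 0)
        (fun x y z => ('i - lam%:C) * wedge21 (cform2 W) Th x y z)
        (fun _ _ _ _ => 0).

From mathcomp Require Import all_boot all_order all_algebra.
From mathcomp Require Import complex ring lra.
Set Implicit Arguments.
Unset Strict Implicit.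
Unset Printing Implicit Defensive.
Import Order.TTheory GRing.Theory Num.Theory.
Local Open Scope ring_scope.

(* The degree-2 part of d rho is -Theta([.,.]) and its degree-4 part is
   (i - lambda) d(omega /\ Theta); the other degrees vanish identically.
   (=>) The annihilator h^0 is spanned by theta and J^* theta (J^* is a
   complex structure on h^0 and rank R = 2), so the degree-2 part vanishes
   exactly when all brackets lie in h.
   (<=) If [g, g] <= h then Theta kills brackets and d(omega /\ Theta)
   reduces to an alternating expression in omega([x_i, x_j], x_k) and Theta.
   Writing g = h (+) <y, J y> with y in p adapted to theta (this uses
   sigma R sigma = -(1 + lambda^2) sigma) and expanding in this frame, it
   vanishes because omega kills p and, by the Nijenhuis condition, ad_X is
   omega-skew on h for X in p.
   The file first collects facts on bilinear forms, on the Lie bracket and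
   on the blocks of K, then the geometry of type-1 structures, then the
   frame computation, and finally the two directions of the theorem. *)

Section BilinearForms.
Variables (R : numDomainType) (n : nat).

Definition bil (M : 'M[R]_n) (a b : 'rV[R]_n) : R := (a *m M *m b^T) 0 0.

Lemma bilDl M (a a' b : 'rV[R]_n) : bil M (a + a') b = bil M a b + bil M a' b.
Proof. by rewrite /bil !mulmxDl mxE. Qed.
Lemma bilDr M (a b b' : 'rV[R]_n) : bil M a (b + b') = bil M a b + bil M a b'.
Proof. by rewrite /bil linearD /= mulmxDr mxE. Qed.
Lemma bilZl M (k : R) (a b : 'rV[R]_n) : bil M (k *: a) b = k * bil M a b.
Proof. by rewrite /bil -!scalemxAl mxE. Qed.
Lemma bilZr M (k : R) (a b : 'rV[R]_n) : bil M a (k *: b) = k * bil M a b.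
Proof. by rewrite /bil linearZ /= -scalemxAr mxE. Qed.
Lemma bilNl M (a b : 'rV[R]_n) : bil M (- a) b = - bil M a b.
Proof. by rewrite -scaleN1r bilZl mulN1r. Qed.
Lemma bilNr M (a b : 'rV[R]_n) : bil M a (- b) = - bil M a b.
Proof. by rewrite -scaleN1r bilZr mulN1r. Qed.

Lemma trmx11 (M : 'M[R]_1) : M = M^T.
Proof. by apply/matrixP => i j; rewrite mxE !ord1. Qed.

Lemma mx11_eq0 (M : 'M[R]_1) : M 0 0 = 0 -> M = 0.
Proof. by move=> H; apply/matrixP => i j; rewrite !ord1 H mxE. Qed.

Lemma bil_eq0 (M : 'M[R]_n) : (forall a b, bil M a b = 0) -> M = 0.
Proof.
move=> H; apply/matrixP => i j; rewrite mxE -(H (delta_mx 0 i) (delta_mx 0 j)).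
by rewrite /bil -rowE trmx_delta -colE !mxE.
Qed.

Lemma half_bil_eq0 (A : 'M[R]_n) : (forall a b, 2^-1 * bil A a b = 0) -> A = 0.
Proof.
move=> H; apply: bil_eq0 => a b; have /eqP := H a b.
by rewrite mulf_eq0 invr_eq0 pnatr_eq0 /= => /eqP.
Qed.

Lemma row_pair_eq0 (v : 'rV[R]_n) : (forall u : 'rV[R]_n, (v *m u^T) 0 0 = 0) -> v = 0.
Proof.
move=> H; apply/rowP => j; rewrite mxE -(H (delta_mx 0 j)).
by rewrite trmx_delta -colE !mxE.
Qed.

Lemma mx_eq_rows m (A B : 'M[R]_(m, n)) : (forall u : 'rV[R]_m, u *m A = u *m B) -> A = B.
Proof. by move=> H; apply/row_matrixP => i; rewrite !rowE H. Qed.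

Lemma bil_skew (M : 'M[R]_n) (a b : 'rV[R]_n) : M^T = - M -> bil M a b = - bil M b a.
Proof.
move=> HM; rewrite /bil (trmx11 (b *m M *m a^T)) !trmx_mul trmxK HM.
by rewrite mulNmx mulmxN [in RHS]mxE opprK mulmxA.
Qed.

Lemma bil_skew_diag (M : 'M[R]_n) (a : 'rV[R]_n) : M^T = - M -> bil M a a = 0.
Proof.
move=> HM; have /eqP := bil_skew a a HM; rewrite -subr_eq0 opprK -mulr2n.
by rewrite mulrn_eq0 /= => /eqP.
Qed.

End BilinearForms.

Section DualityPairing.
Variable R : rcfType.

Lemma dpairDr (a u v : vec R) : dpair a (u + v) = dpair a u + dpair a v.
Proof. by rewrite /dpair linearD /= mulmxDr mxE. Qed.
Lemma dpairZr (a v : vec R) (k : R) : dpair a (k *: v) = k * dpair a v.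
Proof. by rewrite /dpair linearZ /= -scalemxAr mxE. Qed.
Lemma dpairNr (a v : vec R) : dpair a (- v) = - dpair a v.
Proof. by rewrite -scaleN1r dpairZr mulN1r. Qed.
Lemma dpairZl (a v : vec R) (k : R) : dpair (k *: a) v = k * dpair a v.
Proof. by rewrite /dpair -scalemxAl mxE. Qed.
Lemma dpair0l (v : vec R) : dpair 0 v = 0.
Proof. by rewrite /dpair mul0mx mxE. Qed.
Lemma dpair0r (v : vec R) : dpair v 0 = 0.
Proof. by rewrite /dpair trmx0 mulmx0 mxE. Qed.

Lemma dpair_sum (a : vec R) (F : 'I_4 -> vec R) :
  dpair a (\sum_j F j) = \sum_j dpair a (F j).
Proof.
apply: (big_rec2 (fun x y => dpair a x = y)) => [|j x y _ <-].
  by rewrite dpair0r.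
by rewrite dpairDr.
Qed.

Lemma dpair_delta (a : vec R) j : dpair a (delta_mx 0 j) = a 0 j.
Proof. by rewrite /dpair trmx_delta -colE mxE. Qed.

Lemma dpair_eq0_mx (a x : vec R) : dpair a x = 0 -> x *m a^T = 0.
Proof.
by move=> H; apply: mx11_eq0; rewrite /dpair (trmx11 (a *m x^T)) trmx_mul trmxK in H.
Qed.

Lemma dpair_dualmap (M : 'M[R]_4) (a x : vec R) : dpair (dualmap M a) x = dpair a (x *m M).
Proof. by rewrite /dpair /dualmap trmx_mul mulmxA. Qed.

End DualityPairing.

Section LieBracket.
Variables (R : rcfType) (br : vec R -> vec R -> vec R).
Hypothesis Hlie : is_lie_bracket br.

Lemma br0l w : br 0 w = 0.
Proof.
case: Hlie => L _.
have := L 1 0 0 w; rewrite !scale1r addr0 => /(congr1 (fun x => x - br 0 w)).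
by rewrite addrK subrr.
Qed.
Lemma brDl u v w : br (u + v) w = br u w + br v w.
Proof. by case: Hlie => L _; have := L 1 u v w; rewrite !scale1r. Qed.
Lemma brZl a u w : br (a *: u) w = a *: br u w.
Proof. by case: Hlie => L _; have := L a u 0 w; rewrite !addr0 br0l addr0. Qed.
Lemma brC u v : br u v = - br v u.
Proof. by case: Hlie => _ []. Qed.
Lemma brDr u v w : br w (u + v) = br w u + br w v.
Proof. by rewrite brC brDl opprD -!brC. Qed.
Lemma brZr a u w : br w (a *: u) = a *: br w u.
Proof. by rewrite brC brZl -scalerN -brC. Qed.
Lemma brvv u : br u u = 0.
Proof.
have /eqP : (2%:R : R) *: br u u = 0 by rewrite scaler_nat mulr2n {1}brC addNr.
by rewrite scaler_eq0 pnatr_eq0 => /eqP.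
Qed.

Lemma br_sum (u : vec R) (F : 'I_4 -> vec R) : br u (\sum_j F j) = \sum_j br u (F j).
Proof.
apply: (big_rec2 (fun a b => br u a = b)) => [|j a b _ <-].
  by rewrite brC br0l oppr0.
by rewrite brDr.
Qed.

Lemma br_frame (f1 f2 f3 f4 : vec R) (a1 a2 a3 a4 b1 b2 b3 b4 : R) :
  br (a1 *: f1 + a2 *: f2 + a3 *: f3 + a4 *: f4)
     (b1 *: f1 + b2 *: f2 + b3 *: f3 + b4 *: f4) =
  (a1 * b2 - a2 * b1) *: br f1 f2 + (a1 * b3 - a3 * b1) *: br f1 f3 +
  (a1 * b4 - a4 * b1) *: br f1 f4 + (a2 * b3 - a3 * b2) *: br f2 f3 +
  (a2 * b4 - a4 * b2) *: br f2 f4 + (a3 * b4 - a4 * b3) *: br f3 f4.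
Proof.
rewrite !(brDl, brDr, brZl, brZr) !brvv (brC f2 f1) (brC f3 f1) (brC f4 f1).
rewrite (brC f3 f2) (brC f4 f2) (brC f4 f3).
by apply/rowP => j; rewrite !mxE; ring.
Qed.

Lemma adt_pair (u a v : vec R) : dpair (adt br u a) v = - dpair a (br u v).
Proof.
rewrite [in RHS](row_sum_delta v) br_sum dpair_sum -sumrN {1}/dpair mxE.
by apply: eq_bigr => j _; rewrite brZr dpairZr !mxE mulNr mulrC.
Qed.

Lemma adt0 (u : vec R) : adt br u 0 = 0.
Proof. by apply/rowP => j; rewrite !mxE dpair0l oppr0. Qed.

End LieBracket.

Section BlocksOfK.
Variables (R : rcfType) (br : vec R -> vec R -> vec R) (MJ MR Ms MD : 'M[R]_4).
Hypothesis Hgc : is_gen_complex br MJ MR Ms MD.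

(* K^2 = -Id, read off on three of the four blocks *)
Lemma K2_gg (u : vec R) : u *m MJ *m MJ + u *m Ms *m MR = - u.
Proof.
case: Hgc => HK2 _; have := HK2 (u, 0); rewrite /Kapp /Phi_opp /= => -[].
by rewrite !mul0mx !addr0.
Qed.

Lemma K2_gd (u : vec R) : u *m MJ *m Ms + u *m Ms *m MD = 0.
Proof.
case: Hgc => HK2 _; have := HK2 (u, 0); rewrite /Kapp /Phi_opp /= => -[] _.
by rewrite !mul0mx !addr0 oppr0.
Qed.

Lemma K2_dg (u : vec R) : u *m MR *m MJ + u *m MD *m MR = 0.
Proof.
case: Hgc => HK2 _; have := HK2 (0, u); rewrite /Kapp /Phi_opp /= => -[].
by rewrite !mul0mx !add0r oppr0.
Qed.

(* K is skew for the neutral pairing: D = -J^*, sigma and R are skew *)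

Lemma K_skew_D : MD = - MJ^T.
Proof.
case: Hgc => _ [Hs _].
apply/eqP; rewrite -subr_eq0 opprK; apply/eqP/half_bil_eq0 => a b.
have := Hs (b, 0) (0, a); rewrite /Phi_pair /Kapp /=.
rewrite ?mul0mx ?addr0 ?add0r ?dpair0l ?dpair0r ?add0r ?addr0 /dpair trmx_mul mulmxA => <-.
by rewrite /bil mulmxDr mulmxDl mxE mulrDr addrC.
Qed.

Lemma K_skew_sigma : Ms^T = - Ms.
Proof.
case: Hgc => _ [Hs _].
apply/eqP; rewrite -subr_eq0 opprK; apply/eqP/half_bil_eq0 => a b.
have := Hs (a, 0) (b, 0); rewrite /Phi_pair /Kapp /=.
rewrite ?mul0mx ?addr0 ?dpair0l ?dpair0r ?add0r ?addr0 /dpair => <-.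
rewrite /bil mulmxDr mulmxDl mxE mulrDr addrC; congr (_ + _ * _).
by rewrite (trmx11 (b *m Ms *m a^T)) !trmx_mul trmxK mulmxA.
Qed.

Lemma K_skew_R : MR^T = - MR.
Proof.
case: Hgc => _ [Hs _].
apply/eqP; rewrite -subr_eq0 opprK; apply/eqP/half_bil_eq0 => a b.
have := Hs (0, b) (0, a); rewrite /Phi_pair /Kapp /=.
rewrite ?mul0mx ?add0r ?dpair0l ?dpair0r ?add0r ?addr0 /dpair => <-.
rewrite /bil mulmxDr mulmxDl mxE mulrDr; congr (_ * _ + _ * _).
- by rewrite trmx_mul mulmxA.
- by rewrite (trmx11 (a *m MR *m b^T)) !trmx_mul trmxK mulmxA.
Qed.

Lemma J_sigma : MJ *m Ms = Ms *m MJ^T.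
Proof.
apply: mx_eq_rows => u; have /eqP := K2_gd u.
by rewrite K_skew_D mulmxN subr_eq0 !mulmxA => /eqP.
Qed.

Lemma R_J : MR *m MJ = MJ^T *m MR.
Proof.
apply: mx_eq_rows => u; have /eqP := K2_dg u.
by rewrite K_skew_D mulmxN mulNmx subr_eq0 !mulmxA => /eqP.
Qed.

End BlocksOfK.

Section TypeOne.
Variables (R : rcfType) (br : vec R -> vec R -> vec R) (MJ MR Ms MD : 'M[R]_4).
Variables (lam : R) (theta : vec R).
Hypothesis Hgc : is_gen_complex br MJ MR Ms MD.
Hypothesis Hrank : \rank MR = 2%N.
Hypothesis HJ : forall x : vec R, (x <= MR)%MS -> x *m MJ = lam *: x.
Hypothesis Hth0 : theta != 0.
Hypothesis Hth : forall x : vec R, (x <= MR)%MS -> dpair theta x = 0.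

Local Notation Jtheta := (dualmap MJ theta).

(* the constant c = 1 + lambda^2 > 0, with R sigma = -c on h (sigmaR_h) *)
Definition c_lam : R := 1 + lam ^+ 2.

Lemma c_lam_neq0 : c_lam != 0.
Proof. by apply/lt0r_neq0; have := sqr_ge0 lam; rewrite /c_lam; lra. Qed.

Lemma R_J_h : MR *m MJ = lam *: MR.
Proof. by apply/row_matrixP => i; rewrite row_mul HJ ?row_sub // !rowE scalemxAr. Qed.

(* on h, J^2 + R sigma = -1 becomes R sigma = -(1 + lambda^2) *)
Lemma sigmaR_h (z : vec R) : (z <= MR)%MS -> z *m Ms *m MR = - c_lam *: z.
Proof.
move=> Hz; have E := K2_gg Hgc z.
rewrite (HJ Hz) -scalemxAl (HJ Hz) scalerA in E.
apply: (addrI (lam * lam *: z)); rewrite E.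
by rewrite /c_lam expr2 opprD scalerDl scaleN1r scaleNr addrCA subrr addr0.
Qed.

(* J^2 = -1 modulo h, seen by theta *)
Lemma theta_JJ (x : vec R) : dpair theta (x *m MJ *m MJ) = - dpair theta x.
Proof.
have -> : x *m MJ *m MJ = - x - x *m Ms *m MR by rewrite -(K2_gg Hgc x) addrK.
by rewrite dpairDr !dpairNr (Hth (submxMl _ _)) oppr0 addr0.
Qed.

Lemma theta_R : theta *m MR^T = 0.
Proof.
apply: row_pair_eq0 => u.
rewrite -[LHS]/(dpair (dualmap MR theta) u) dpair_dualmap.
exact: Hth (submxMl _ _).
Qed.

Lemma Jtheta_R : Jtheta *m MR^T = 0.
Proof. by rewrite /dualmap -mulmxA -trmx_mul R_J_h linearZ /= -scalemxAr theta_R scaler0. Qed.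

Lemma Jtheta_J : Jtheta *m MJ^T = - theta.
Proof.
apply/eqP; rewrite -subr_eq0 opprK; apply/eqP/row_pair_eq0 => u.
rewrite mulmxDl mxE -[(Jtheta *m MJ^T *m u^T) 0 0]/(dpair (dualmap MJ Jtheta) u).
by rewrite !dpair_dualmap theta_JJ addNr.
Qed.

Lemma Jtheta_h (z : vec R) : (z <= MR)%MS -> dpair Jtheta z = 0.
Proof. by move=> Hz; rewrite dpair_dualmap (HJ Hz) dpairZr Hth // mulr0. Qed.

Lemma theta_Jtheta_indep (a b : R) : a *: theta + b *: Jtheta = 0 -> a = 0 /\ b = 0.
Proof.
move=> H1.
have H2 : a *: Jtheta - b *: theta = 0.
  have := congr1 (fun v => v *m MJ^T) H1; rewrite /= mulmxDl -!scalemxAl Jtheta_J mul0mx.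
  by rewrite scalerN.
move: (Jtheta) H1 H2 => t H1 H2.
have Hj j : (a ^+ 2 + b ^+ 2) * theta 0 j = 0.
  have := congr1 (fun v : vec R => v 0 j) H1; have := congr1 (fun v : vec R => v 0 j) H2.
  rewrite /= !mxE => e2 e1.
  have -> : (a ^+ 2 + b ^+ 2) * theta 0 j =
    a * (a * theta 0 j + b * t 0 j) - b * (a * t 0 j - b * theta 0 j) by ring.
  by rewrite e1 e2; ring.
have Hab : a ^+ 2 + b ^+ 2 = 0.
  apply/eqP; apply: contraNT Hth0 => Hn; apply/eqP/rowP => j.
  by have /eqP := Hj j; rewrite mulf_eq0 (negbTE Hn) mxE => /eqP.
have ha := sqr_ge0 a; have hb := sqr_ge0 b.
have /eqP : a ^+ 2 = 0 by lra.
have /eqP : b ^+ 2 = 0 by lra.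
by rewrite !sqrf_eq0 => /eqP -> /eqP ->.
Qed.

Lemma annihilator_h : (kermx MR^T == theta + Jtheta)%MS.
Proof.
have Hsub : (theta + Jtheta <= kermx MR^T)%MS.
  by rewrite addsmx_sub; apply/andP; split; apply/sub_kermxP; [exact: theta_R | exact: Jtheta_R].
have Hcap : (theta :&: Jtheta)%MS = 0.
  apply/eqP; rewrite -submx0; apply/rV_subP => w; rewrite sub_capmx.
  case/andP => /sub_rVP[a ->] /sub_rVP[b Hb].
  have : a *: theta + (- b) *: Jtheta = 0 by rewrite Hb scaleNr subrr.
  by case/theta_Jtheta_indep => -> _; rewrite scale0r sub0mx.
have HJth : Jtheta != 0.
  apply/eqP => H; have := @theta_Jtheta_indep 0 1; rewrite H scaler0 scale0r addr0.
  by case=> // _ /eqP; rewrite oner_eq0.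
apply/eqmxP/eqmx_sym/eqmxP; rewrite -(mxrank_leqif_eq Hsub).2.
by rewrite mxrank_disjoint_sum ?Hcap // mxrank_ker mxrank_tr Hrank !rank_rV Hth0 HJth.
Qed.

Lemma mem_h (x : vec R) : dpair theta x = 0 -> dpair theta (x *m MJ) = 0 -> (x <= MR)%MS.
Proof.
move=> H1 H2; rewrite submxE; apply/eqP/rowP => j; rewrite [RHS]mxE.
pose cj : vec R := (cokermx MR *m (delta_mx j 0 : 'cV[R]_4))^T.
have Hc : (cj <= kermx MR^T)%MS.
  by apply/sub_kermxP; rewrite /cj -trmx_mul mulmxA mulmx_coker mul0mx trmx0.
have : (cj <= theta + Jtheta)%MS by case/andP: annihilator_h => Hk _; exact: submx_trans Hc Hk.
case/sub_addsmxP => u Hu.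
have -> : (x *m cokermx MR) 0 j = (x *m cj^T) 0 0.
  by rewrite /cj trmxK [in RHS]mulmxA -colE [RHS]mxE.
have Ht : x *m Jtheta^T = 0 by apply: dpair_eq0_mx; rewrite dpair_dualmap.
rewrite Hu linearD /= (trmx_mul u.1) (trmx_mul u.2) mulmxDr !mulmxA (dpair_eq0_mx H1) Ht.
by rewrite !mul0mx addr0 mxE.
Qed.

Lemma exists_theta_adapted :
  exists y0 : vec R, dpair theta y0 = 1 /\ dpair theta (y0 *m MJ) = 0.
Proof.
have /existsP[j Hj] : [exists j, theta 0 j != 0].
  rewrite -negb_forall; apply: contra Hth0 => /forallP H; apply/eqP/rowP => j.
  by rewrite mxE; apply/eqP/H.
pose v : vec R := (theta 0 j)^-1 *: delta_mx 0 j.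
have Hv : dpair theta v = 1 by rewrite dpairZr dpair_delta mulVf.
pose t := dpair theta (v *m MJ).
have Ht : 1 + t ^+ 2 != 0 by apply/lt0r_neq0; have := sqr_ge0 t; lra.
exists ((1 + t ^+ 2)^-1 *: (v + t *: (v *m MJ))); split.
  by rewrite dpairZr dpairDr dpairZr Hv -/t -expr2 mulVf.
rewrite -scalemxAl mulmxDl -scalemxAl dpairZr dpairDr dpairZr theta_JJ Hv -/t.
by rewrite mulrN1 subrr mulr0.
Qed.

Lemma proj_h (y : vec R) : dpair theta y = 1 -> dpair theta (y *m MJ) = 0 ->
  forall x : vec R,
    ((x - dpair theta x *: y + dpair theta (x *m MJ) *: (y *m MJ))%R <= MR)%MS.
Proof.
move=> H1 H2 x; apply: mem_h.
  by rewrite !dpairDr dpairNr !dpairZr H1 H2 mulr1 mulr0 addr0 subrr.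
rewrite !mulmxDl mulNmx -!scalemxAl !dpairDr dpairNr !dpairZr H2 theta_JJ H1.
by rewrite mulr0 subr0 mulrN1 subrr.
Qed.

(* T = c sigma + sigma R sigma: a skew form, killed by h and commuting with J,
   hence zero; this gives sigma R sigma = -c sigma *)
Definition sigma_defect : 'M[R]_4 := c_lam *: Ms + Ms *m MR *m Ms.

Lemma sigma_defect_skew : sigma_defect^T = - sigma_defect.
Proof.
rewrite /sigma_defect linearD /= linearZ /= !trmx_mul (K_skew_sigma Hgc) (K_skew_R Hgc).
by rewrite !(mulNmx, mulmxN) !opprK scalerN opprD mulmxA.
Qed.

Lemma sigma_defect_h (z : vec R) : (z <= MR)%MS -> z *m sigma_defect = 0.
Proof.
move=> Hz; rewrite /sigma_defect mulmxDr -scalemxAr !mulmxA sigmaR_h // -scalemxAl.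
by rewrite scaleNr subrr.
Qed.

Lemma sigma_defect_J : MJ *m sigma_defect = sigma_defect *m MJ^T.
Proof.
have JS := J_sigma Hgc.
rewrite /sigma_defect mulmxDr mulmxDl -scalemxAr -scalemxAl JS; congr (_ + _).
rewrite !mulmxA JS -[Ms *m MJ^T *m MR]mulmxA -(R_J Hgc) mulmxA.
by rewrite -[Ms *m MR *m MJ *m Ms]mulmxA JS !mulmxA.
Qed.

Lemma sigma_defect_eq0 : sigma_defect = 0.
Proof.
have [y0 [Hy1 Hy2]] := exists_theta_adapted.
set T := sigma_defect.
have tsk a b : bil T a b = - bil T b a by apply: bil_skew sigma_defect_skew.
have tl z b : (z <= MR)%MS -> bil T z b = 0.
  by move=> Hz; rewrite /bil sigma_defect_h // mul0mx mxE.
have tr a z : (z <= MR)%MS -> bil T a z = 0 by move=> Hz; rewrite tsk tl ?oppr0.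
have tJ a b : bil T (a *m MJ) b = bil T a (b *m MJ).
  by rewrite /bil -(mulmxA a MJ T) sigma_defect_J mulmxA -(mulmxA (a *m T)) -trmx_mul.
have t00 a : bil T a a = 0 by apply: bil_skew_diag sigma_defect_skew.
have t01 : bil T y0 (y0 *m MJ) = 0.
  have /eqP := tsk (y0 *m MJ) y0; rewrite tJ -subr_eq0 opprK -mulr2n.
  by rewrite mulrn_eq0 /= => /eqP.
have t10 : bil T (y0 *m MJ) y0 = 0 by rewrite tJ.
have t11 : bil T (y0 *m MJ) (y0 *m MJ) = 0.
  rewrite tJ -[y0 *m MJ *m MJ](addrK (y0 *m Ms *m MR)) (K2_gg Hgc y0).
  by rewrite bilDr !bilNr t00 tr ?submxMl // oppr0 addr0.
apply: bil_eq0 => a b.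
have Ea := proj_h Hy1 Hy2 a; have Eb := proj_h Hy1 Hy2 b.
set da := (a - _ + _)%R in Ea; set db := (b - _ + _)%R in Eb.
have -> : a = da + (dpair theta a *: y0 - dpair theta (a *m MJ) *: (y0 *m MJ)).
  by rewrite /da addrACA subrK subrr addr0.
have -> : b = db + (dpair theta b *: y0 - dpair theta (b *m MJ) *: (y0 *m MJ)).
  by rewrite /db addrACA subrK subrr addr0.
rewrite bilDl tl // add0r bilDr tr // add0r.
rewrite !(bilDl, bilDr, bilNl, bilNr, bilZl, bilZr) t00 t01 t10 t11.
by rewrite !(mulr0, oppr0, addr0).
Qed.

Lemma sigma_R_sigma : Ms *m MR *m Ms = - c_lam *: Ms.
Proof.
have /eqP := sigma_defect_eq0; rewrite /sigma_defect addrC addr_eq0 => /eqP ->.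
by rewrite scaleNr.
Qed.

Lemma exists_p_adapted : exists y : vec R,
  y *m Ms = 0 /\ dpair theta y = 1 /\ dpair theta (y *m MJ) = 0.
Proof.
have [y0 [H1 H2]] := exists_theta_adapted.
exists (y0 + c_lam^-1 *: (y0 *m Ms *m MR)); split; [|split].
- rewrite mulmxDl -scalemxAl -!mulmxA (mulmxA Ms) sigma_R_sigma -scalemxAr scalerA.
  by rewrite mulrN mulVf ?c_lam_neq0 // scaleN1r subrr.
- by rewrite dpairDr dpairZr (Hth (submxMl _ _)) mulr0 addr0.
- rewrite mulmxDl -scalemxAl (HJ (submxMl _ _)) dpairDr !dpairZr.
  by rewrite (Hth (submxMl _ _)) H2 !mulr0 addr0.
Qed.

Lemma p_stable_J (y : vec R) : y *m Ms = 0 -> y *m MJ *m Ms = 0.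
Proof. by move=> Hy; rewrite -mulmxA (J_sigma Hgc) mulmxA Hy mul0mx. Qed.

Lemma basis_h : exists e1 e2 : vec R, (e1 <= MR)%MS /\ (e2 <= MR)%MS /\
  forall z : vec R, (z <= MR)%MS -> exists a b : R, z = a *: e1 + b *: e2.
Proof.
have [B rkB defB] : exists2 B : 'M[R]_(\rank MR, 4), \rank MR = 2%N & (B :=: MR)%MS.
  by exists (row_base MR); [exact: Hrank | exact: eq_row_base].
move: B defB; rewrite rkB => B defB.
exists (row ord0 B), (row (lift ord0 ord0) B); split; [|split].
- by rewrite -defB row_sub.
- by rewrite -defB row_sub.
move=> z; rewrite -defB => /submxP[u ->].
exists (u 0 ord0), (u 0 (lift ord0 ord0)).
by rewrite mulmx_sum_row big_ord_recl big_ord1.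
Qed.

Lemma frame_dec (e1 e2 y : vec R) :
  dpair theta y = 1 -> dpair theta (y *m MJ) = 0 ->
  (forall z : vec R, (z <= MR)%MS -> exists a b : R, z = a *: e1 + b *: e2) ->
  forall x : vec R, exists a b c d : R,
    x = a *: e1 + b *: e2 + c *: y + d *: (y *m MJ).
Proof.
move=> H1 H2 Hb x; have [a [b E]] := Hb _ (proj_h H1 H2 x).
exists a, b, (dpair theta x), (- dpair theta (x *m MJ)).
by rewrite -E; apply/rowP => j; rewrite !mxE; ring.
Qed.

(* on h, R sigma = -c, so every element of h is R of something *)
Lemma h_as_R (Z : vec R) : (Z <= MR)%MS -> Z = (- c_lam^-1 *: (Z *m Ms)) *m MR.
Proof.
move=> HZ; rewrite -scalemxAl sigmaR_h // scalerA mulrN mulNr mulVf ?c_lam_neq0 //.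
by rewrite opprK scale1r.
Qed.

Lemma dpair_frame (phi e1 e2 y : vec R) (a b c d : R) :
  (forall z, (z <= MR)%MS -> dpair phi z = 0) -> (e1 <= MR)%MS -> (e2 <= MR)%MS ->
  dpair phi (a *: e1 + b *: e2 + c *: y + d *: (y *m MJ)) =
  c * dpair phi y + d * dpair phi (y *m MJ).
Proof.
by move=> Hphi He1 He2; rewrite !dpairDr !dpairZr (Hphi _ He1) (Hphi _ He2) !mulr0 !add0r.
Qed.

Section Omega.
Variable W : 'M[R]_4.
Hypothesis Hlie : is_lie_bracket br.
Hypothesis HWsk : W^T = - W.
Hypothesis HW : forall xi1 xi2 : vec R,
  ((xi1 *m MR) *m W *m (xi2 *m MR)^T) 0 0 = dpair xi1 (xi2 *m MR).
Hypothesis HWp : forall X : vec R, X *m Ms = 0 -> X *m W = 0.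
Hypothesis Hbr : forall u v : vec R, (br u v <= MR)%MS.

Lemma omega_p_r (z w : vec R) : w *m Ms = 0 -> bil W z w = 0.
Proof. by move=> Hw; rewrite bil_skew // /bil HWp // mul0mx mxE oppr0. Qed.

Lemma omega_R_h (xi V : vec R) : (V <= MR)%MS -> bil W (xi *m MR) V = dpair xi V.
Proof. by case/submxP => eta ->; rewrite /bil HW. Qed.

(* first component of N_K(X, Z) = 0 for X in p, Z in h, when [g, g] <= h:
   R (ad_X^t (sigma Z)) = -c [X, Z] *)
Lemma nijenhuis_p_h (X Z : vec R) : X *m Ms = 0 -> (Z <= MR)%MS ->
  adt br X (Z *m Ms) *m MR = - c_lam *: br X Z.
Proof.
move=> HX HZ; case: Hgc => HK2 [_ HN].
have := HN (X, 0) (Z, 0); rewrite /= HK2 /Kapp /Phi_br /Phi_add /Phi_opp /= => -[E _].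
move: E; rewrite !mul0mx !addr0 HX !(adt0 br) ?subr0 ?sub0r.
rewrite (HJ HZ) !(brZr Hlie) (HJ (Hbr _ _)) -scalemxAl (HJ (Hbr _ _)) mul0mx addr0.
move: (adt br X (Z *m Ms) *m MR) (br X Z) (br (X *m MJ) Z) => AM B B' E.
apply/rowP => j; have := congr1 (fun v : vec R => v 0 j) E.
by rewrite !mxE /c_lam; lra.
Qed.

Lemma omega_ad_skew (X Z V : vec R) : X *m Ms = 0 -> (Z <= MR)%MS -> (V <= MR)%MS ->
  bil W (br X Z) V + bil W Z (br X V) = 0.
Proof.
move=> HX HZ HV.
have -> : br X Z = (- c_lam^-1 *: adt br X (Z *m Ms)) *m MR.
  rewrite -scalemxAl nijenhuis_p_h // scalerA mulrN mulNr mulVf ?c_lam_neq0 //.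
  by rewrite opprK scale1r.
rewrite omega_R_h // [X in bil W X _](h_as_R HZ) omega_R_h //.
by rewrite !dpairZl (adt_pair Hlie) mulrN addNr.
Qed.

Lemma omega_ad_swap (X Z V : vec R) : X *m Ms = 0 -> (Z <= MR)%MS -> (V <= MR)%MS ->
  bil W (br V X) Z = bil W (br Z X) V.
Proof.
move=> HX HZ HV; have := omega_ad_skew HX HZ HV.
rewrite (brC Hlie X Z) (brC Hlie X V) bilNl bilNr (bil_skew Z) //; lra.
Qed.

(* the value of d(omega /\ phi) at (x0, x1, x2, x3) for a 1-form phi that
   vanishes on brackets, written out from the Chevalley-Eilenberg formula *)
Definition dwedge (phi x0 x1 x2 x3 : vec R) : R :=
  let f B y z := bil W B y * dpair phi z - bil W B z * dpair phi y in
  - f (br x0 x1) x2 x3 + f (br x0 x2) x1 x3 - f (br x0 x3) x1 x2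
  - f (br x1 x2) x0 x3 + f (br x1 x3) x0 x2 - f (br x2 x3) x0 x1.

Section Frame.
Variables (e1 e2 y : vec R).
Hypotheses (He1 : (e1 <= MR)%MS) (He2 : (e2 <= MR)%MS) (Hy : y *m Ms = 0).

Lemma omega_frame_r (B : vec R) (a b c d : R) :
  bil W B (a *: e1 + b *: e2 + c *: y + d *: (y *m MJ)) = a * bil W B e1 + b * bil W B e2.
Proof.
rewrite !bilDr !bilZr (omega_p_r _ Hy) (omega_p_r _ (p_stable_J Hy)).
by rewrite !mulr0 !addr0.
Qed.

(* in frame coordinates d(omega /\ phi) is a multiple of
   d omega(e1, e2, p), which vanishes by omega_ad_swap *)
Lemma dwedge_frame (phi : vec R) : (forall z, (z <= MR)%MS -> dpair phi z = 0) ->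
  forall a0 b0 c0 d0 a1 b1 c1 d1 a2 b2 c2 d2 a3 b3 c3 d3 : R,
  dwedge phi (a0 *: e1 + b0 *: e2 + c0 *: y + d0 *: (y *m MJ))
             (a1 *: e1 + b1 *: e2 + c1 *: y + d1 *: (y *m MJ))
             (a2 *: e1 + b2 *: e2 + c2 *: y + d2 *: (y *m MJ))
             (a3 *: e1 + b3 *: e2 + c3 *: y + d3 *: (y *m MJ)) = 0.
Proof.
move=> Hphi *; rewrite /dwedge /= !(br_frame Hlie) !(bilDl, bilZl) !omega_frame_r.
rewrite !(dpair_frame _ _ _ _ _ Hphi He1 He2).
rewrite (omega_ad_swap Hy He1 He2) (omega_ad_swap (p_stable_J Hy) He1 He2).
ring.
Qed.

End Frame.

Lemma dwedge_eq0 (phi : vec R) : (forall z, (z <= MR)%MS -> dpair phi z = 0) ->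
  forall x0 x1 x2 x3, dwedge phi x0 x1 x2 x3 = 0.
Proof.
move=> Hphi x0 x1 x2 x3.
have [e1 [e2 [He1 [He2 Hb]]]] := basis_h.
have [y [Hy [H1 H2]]] := exists_p_adapted.
have dec := frame_dec H1 H2 Hb.
have [a0 [b0 [c0 [d0 ->]]]] := dec x0; have [a1 [b1 [c1 [d1 ->]]]] := dec x1.
have [a2 [b2 [c2 [d2 ->]]]] := dec x2; have [a3 [b3 [c3 [d3 ->]]]] := dec x3.
exact: dwedge_frame.
Qed.

End Omega.

Section Spinor.
Local Open Scope complex_scope.
Variable W : 'M[R]_4.

Lemma complex_eq0 (a b : R) : a%:C + 'i * b%:C = 0 -> a = 0 /\ b = 0.
Proof.
move=> E; have := congr1 (@complex.Re R) E; have := congr1 (@complex.Im R) E.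
by rewrite /= => e1 e2; split; lra.
Qed.

(* (=>): the degree-2 part of d rho is -Theta([u, v]) *)
Lemma closed_bracket_in_h :
  mform_eq0 (dmf br (rho_spinor MJ W lam theta)) -> forall u v, (br u v <= MR)%MS.
Proof.
case=> _ [_ [H2 _]] u v; have /eqP := H2 u v; rewrite /= /d1 oppr_eq0 => /eqP.
case/complex_eq0 => Hu HJu; apply: mem_h => //.
by rewrite -dpair_dualmap.
Qed.

(* (<=): Theta kills brackets, and the degree-4 part is (i - lambda) times
   d(omega /\ theta) + i d(omega /\ J^* theta) *)
Lemma bracket_in_h_closed :
  is_lie_bracket br -> W^T = - W ->
  (forall xi1 xi2 : vec R,
      ((xi1 *m MR) *m W *m (xi2 *m MR)^T) 0 0 = dpair xi1 (xi2 *m MR)) ->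
  (forall X : vec R, X *m Ms = 0 -> X *m W = 0) ->
  (forall u v : vec R, (br u v <= MR)%MS) ->
  mform_eq0 (dmf br (rho_spinor MJ W lam theta)).
Proof.
move=> Hlie HWsk HW HWp Hbr.
have thbr a b : cform1 theta (br a b) = 0 by rewrite /cform1 Hth.
have Jthbr a b : cform1 Jtheta (br a b) = 0 by rewrite /cform1 Jtheta_h.
split=> //; split=> //; split; first by move=> x y; rewrite /= /d1 thbr Jthbr mulr0 addr0 oppr0.
split; first by move=> x y z; rewrite /= /d2; ring.
move=> x0 x1 x2 x3; rewrite /= /d3 /wedge21 !thbr !Jthbr.
transitivity (('i - lam%:C) *
  ((dwedge W theta x0 x1 x2 x3)%:C + 'i * (dwedge W Jtheta x0 x1 x2 x3)%:C)).
  by rewrite /dwedge /cform1 /cform2 /bil /= !(rmorphD, rmorphN, rmorphM) /=; ring.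
rewrite !(dwedge_eq0 Hlie HWsk HW HWp Hbr) //; last exact: Jtheta_h.
by rewrite mulr0 addr0 mulr0.
Qed.

End Spinor.

End TypeOne.

Theorem proposition2p3 (R : rcfType) (br : vec R -> vec R -> vec R)
  (MJ MR Ms MD : 'M[R]_4) (lam : R) (W : 'M[R]_4) (theta : vec R) :
  is_lie_bracket br ->
  is_gen_complex br MJ MR Ms MD ->
  \rank MR = 2%N ->
  (* J restricted to h = Im R is lam * Id *)
  (forall x : vec R, (x <= MR)%MS -> x *m MJ = lam *: x) ->
  (* omega in wedge^2 g^*, omega(R xi1, R xi2) = xi1(R xi2), i_X omega = 0 on p = ker sigma *)
  W^T = - W ->
  (forall xi1 xi2 : vec R,
      ((xi1 *m MR) *m W *m (xi2 *m MR)^T) 0 0 = dpair xi1 (xi2 *m MR)) ->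
  (forall X : vec R, X *m Ms = 0 -> X *m W = 0) ->
  (* theta a nonzero element of the annihilator of h *)
  theta != 0 ->
  (forall x : vec R, (x <= MR)%MS -> dpair theta x = 0) ->
  (mform_eq0 (dmf br (rho_spinor MJ W lam theta)) <->
   (forall u v : vec R, (br u v <= MR)%MS)).
Proof.
move=> Hlie Hgc Hrank HJ HWsk HW HWp Hth0 Hth; split.
- exact: (closed_bracket_in_h Hgc Hrank HJ Hth0 Hth).
- exact: (bracket_in_h_closed Hgc Hrank HJ Hth0 Hth Hlie HWsk HW HWp).
Qed.
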